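(* A finite word is LSP if and only if it is a prefix of an infinite LSP word.
   Context: A finite word $u$ is a left special factor of a (finite or infinite) word $w$ if there are distinct letters $x\neq y$ such that $xu$ and $yu$ are factors of $w$. A word is LSP if every left special factor of it is a prefix of it. Words are over a finite alphabet. *)

From mathcomp Require Import all_boot.
Set Implicit Arguments. Unset Strict Implicit. Unset Printing Implicit Defensive.

Definition factor_inf (A : finType) (u : seq A) (x : nat -> A) : Prop :=
  exists i : nat, u = mkseq (fun k => x (i + k)) (size u).

Definition prefix_inf (A : finType) (u : seq A) (x : nat -> A) : Prop :=
  u = mkseq x (size u).

Definition left_special_fin (A : finType) (u w : seq A) : Prop :=
  exists a b : A, a != b /\ infix (a :: u) w /\ infix (b :: u) w.

Definition left_special_inf (A : finType) (u : seq A) (x : nat -> A) : Prop :=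
  exists a b : A, a != b /\ factor_inf (a :: u) x /\ factor_inf (b :: u) x.

Definition LSP_fin (A : finType) (w : seq A) : Prop :=
  forall u : seq A, left_special_fin u w -> prefix u w.

Definition LSP_inf (A : finType) (x : nat -> A) : Prop :=
  forall u : seq A, left_special_inf u x -> prefix_inf u x.

From mathcomp Require Import all_boot.
Set Implicit Arguments. Unset Strict Implicit. Unset Printing Implicit Defensive.

(* An LSP word w stays LSP when extended by the letter c that follows its
   longest proper border.  A left special factor of w c that is not a factor
   of w has the form v c with a v a suffix of w and b v c a factor of w; then
   v is left special in w, hence a prefix and thus a border of w.  Either v is
   the longest border, and v c is a prefix of w c, or a v is a suffix of the
   longest border, so that a v c already occurs in w and v c is left special,
   hence a prefix, in w.  Iterating the extension yields a chain of LSP words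
   whose limit is LSP, since each left special factor of the limit is left
   special in a long enough member of the chain.  Conversely the left special
   factors of a prefix of an LSP infinite word are left special in the
   infinite word. *)

Lemma take_mkseq (T : Type) (f : nat -> T) k n : take k (mkseq f n) = mkseq f (minn k n).
Proof. by rewrite /mkseq -map_take take_iota. Qed.

Lemma drop_mkseq (T : Type) (f : nat -> T) k n :
  drop k (mkseq f n) = mkseq (fun i => f (k + i)) (n - k).
Proof.
by rewrite /mkseq -map_drop drop_iota add0n -[k in iota k]addn0 iotaDl -map_comp.
Qed.

Lemma nth_prefix (T : eqType) (x0 : T) s t i :
  prefix s t -> i < size s -> nth x0 s i = nth x0 t i.
Proof. by move=> /prefixP[q ->] i_lt; rewrite nth_cat i_lt. Qed.

Section Borders.

Variable T : eqType.
Implicit Types s t w : seq T.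

Lemma prefix_of_prefixes s t w :
  prefix s w -> prefix t w -> size s <= size t -> prefix s t.
Proof.
move=> /prefixP[p ->] /prefixP[q eq_tq] st; rewrite prefixE -(takel_cat q st).
by rewrite -eq_tq take_size_cat.
Qed.

Lemma suffix_of_suffixes s t w :
  suffix s w -> suffix t w -> size s <= size t -> suffix s t.
Proof.
by rewrite /suffix -(size_rev s) -(size_rev t); apply: prefix_of_prefixes.
Qed.

Lemma suffix_same_size s t w : suffix s w -> suffix t w -> size s = size t -> s = t.
Proof. by rewrite !suffixE => /eqP es /eqP et eq_st; rewrite -es -et eq_st. Qed.

Definition border_size w := \max_(i < size w | suffix (take i w) w) i.

Lemma border_size_lt w : 0 < size w -> border_size w < size w.
Proof.
move=> w_gt0; rewrite -(prednK w_gt0) ltnS.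
by apply/bigmax_leqP => i _; rewrite -ltnS prednK.
Qed.

Lemma suffix_border w : suffix (take (border_size w) w) w.
Proof.
case: (posnP (size w)) => [/size0nil -> // | w_gt0].
have borders_gt0 : 0 < #|[pred i : 'I_(size w) | suffix (take i w) w]|.
  by apply/card_gt0P; exists (Ordinal w_gt0); rewrite inE take0 suffix0s.
have [i] := eq_bigmax_cond (fun i : 'I_(size w) => nat_of_ord i) borders_gt0.
by rewrite /border_size => + ->.
Qed.

Lemma leq_border_size s w :
  prefix s w -> suffix s w -> size s < size w -> size s <= border_size w.
Proof.
rewrite prefixE => /eqP take_s s_suff s_lt.
by apply: (leq_bigmax_cond (Ordinal s_lt)); rewrite /= take_s.
Qed.

End Borders.

Section Extension.

Variables (A : finType) (c0 : A).

Definition extend (w : seq A) := rcons w (nth c0 w (border_size w)).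

Lemma prefix_of_new_left_special w u a b :
  LSP_fin w -> a != b -> suffix (a :: u) (extend w) -> infix (b :: u) w ->
  prefix u w.
Proof.
move=> Lw ab; case/lastP: u => [_ _|v d]; first exact: prefix0s.
rewrite -rcons_cons suffix_rcons => /andP[/eqP -> av_suff] bvc_inf.
set c := nth c0 w (border_size w).
have v_pref : prefix v w.
  apply: Lw; exists a, b; split=> //; split; first exact: suffixW.
  by apply: (@catr_infix _ [:: c]); rewrite cats1.
have v_suff : suffix v w := suffix_trans (suffix_cons v a) av_suff.
have v_lt : size v < size w := size_suffix av_suff.
have bs_lt : border_size w < size w by rewrite border_size_lt // (leq_ltn_trans _ v_lt).
have border_c : rcons (take (border_size w) w) c = take (border_size w).+1 w.
  by rewrite -take_nth.
have := leq_border_size v_pref v_suff v_lt; rewrite leq_eqVlt => /orP[/eqP v_bs | v_short].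
- move: v_pref; rewrite prefixE v_bs => /eqP <-.
  by rewrite border_c prefix_take.
- apply: Lw; exists a, b; split=> //; split=> //.
  have : suffix (a :: rcons v c) (rcons (take (border_size w) w) c).
    rewrite -rcons_cons suffix_rcons eqxx (suffix_of_suffixes av_suff (suffix_border w)) //.
    by rewrite size_takel // ltnW.
  by rewrite border_c => /suffix_prefix_trans; apply; apply: prefix_take.
Qed.

Lemma LSP_fin_extend w : LSP_fin w -> LSP_fin (extend w).
Proof.
move=> Lw u [a [b [ab [a_inf b_inf]]]].
suff u_pref : prefix u w by rewrite /extend -cats1 prefix_catl.
move: a_inf b_inf; rewrite !infix_rconsl => /orP[a_suff | a_inf] /orP[b_suff | b_inf].
- by case: (suffix_same_size a_suff b_suff erefl) ab => ->; rewrite eqxx.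
- exact: prefix_of_new_left_special Lw ab a_suff b_inf.
- by apply: prefix_of_new_left_special Lw _ b_suff a_inf; rewrite eq_sym.
- by apply: Lw; exists a, b.
Qed.

Lemma size_iter_extend n w : size (iter n extend w) = size w + n.
Proof. by elim: n => [|n IHn] /=; rewrite ?addn0 // size_rcons IHn addnS. Qed.

Lemma LSP_fin_iter_extend n w : LSP_fin w -> LSP_fin (iter n extend w).
Proof. by move=> Lw; elim: n => //= n; apply: LSP_fin_extend. Qed.

End Extension.

Section InfiniteWords.

Variables (A : finType) (x : nat -> A).

Lemma prefix_inf_mkseq n : prefix_inf (mkseq x n) x.
Proof. by rewrite /prefix_inf size_mkseq. Qed.

Lemma prefix_inf_prefix u w : prefix u w -> prefix_inf w x -> prefix_inf u x.
Proof.
move=> uw wx; have u_le := size_prefix uw; move: uw; rewrite prefixE => /eqP <-.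
by rewrite wx take_mkseq (minn_idPl u_le); apply: prefix_inf_mkseq.
Qed.

Lemma prefix_of_prefix_inf u w :
  prefix_inf u x -> prefix_inf w x -> size u <= size w -> prefix u w.
Proof. by move=> ux wx uw; rewrite prefixE wx take_mkseq (minn_idPl uw) -ux. Qed.

Lemma factor_inf_infix u w : infix u w -> prefix_inf w x -> factor_inf u x.
Proof.
case/infixP=> [p [q ->]] wx.
have pux : prefix_inf (p ++ u) x.
  by apply: prefix_inf_prefix _ wx; rewrite catA prefix_prefix.
exists (size p); have := congr1 (drop (size p)) pux.
by rewrite drop_size_cat // drop_mkseq size_cat addKn.
Qed.

Lemma infix_factor_inf u :
  factor_inf u x -> exists n, forall w, prefix_inf w x -> n <= size w -> infix u w.
Proof.
case=> i ux; exists (i + size u) => w wx w_large.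
have -> : u = drop i (mkseq x (i + size u)) by rewrite drop_mkseq addKn.
apply: infix_prefix_trans (infix_drop _ _) _.
by apply: prefix_of_prefix_inf (prefix_inf_mkseq _) wx _; rewrite size_mkseq.
Qed.

Lemma left_special_inf_fin u w :
  prefix_inf w x -> left_special_fin u w -> left_special_inf u x.
Proof.
move=> wx [a [b [ab [a_inf b_inf]]]]; exists a, b.
by split=> //; split; apply: factor_inf_infix wx.
Qed.

Lemma left_special_fin_inf u : left_special_inf u x ->
  exists n, forall w, prefix_inf w x -> n <= size w -> left_special_fin u w.
Proof.
move=> [a [b [ab [/infix_factor_inf[na a_inf] /infix_factor_inf[nb b_inf]]]]].
exists (maxn na nb) => w wx; rewrite geq_max => /andP[na_le nb_le].
by exists a, b; split=> //; split; [apply: a_inf | apply: b_inf].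
Qed.

Lemma LSP_fin_prefix_inf w : LSP_inf x -> prefix_inf w x -> LSP_fin w.
Proof.
move=> Lx wx u u_ls; have ux := Lx u (left_special_inf_fin wx u_ls).
apply: prefix_of_prefix_inf ux wx _.
by case: u_ls => [a [_ [_ [/size_infix u_lt _]]]]; apply: ltnW.
Qed.

Lemma LSP_inf_of_prefixes :
  (forall n, exists w, [/\ prefix_inf w x, n <= size w & LSP_fin w]) -> LSP_inf x.
Proof.
move=> long_prefixes u /left_special_fin_inf[n u_ls].
have [w [wx w_large Lw]] := long_prefixes n.
exact: prefix_inf_prefix (Lw u (u_ls w wx w_large)) wx.
Qed.

End InfiniteWords.

Section ChainLimit.

Variables (A : finType) (c0 : A) (s : nat -> seq A).
Hypotheses (s_prefix : forall n, prefix (s n) (s n.+1)) (s_size : forall n, n < size (s n.+1)).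

Definition chain_limit (i : nat) : A := nth c0 (s i.+1) i.

Lemma prefix_inf_chain_limit n : prefix_inf (s n) chain_limit.
Proof.
have s_mono := homo_leq (@prefix_refl A) (@prefix_trans A) s_prefix.
apply: (@eq_from_nth _ c0) => [|i i_lt]; first by rewrite size_mkseq.
rewrite nth_mkseq // /chain_limit (nth_prefix c0 (s_mono _ _ (leq_maxl n i.+1))) //.
by rewrite (nth_prefix c0 (s_mono _ _ (leq_maxr n i.+1))).
Qed.

End ChainLimit.

Theorem lemma6 (A : finType) (hA : 0 < #|A|) (w : seq A) :
  LSP_fin w <-> exists x : nat -> A, LSP_inf x /\ prefix_inf w x.
Proof.
have [c0 _] := card_gt0P hA.
split=> [Lw | [x [Lx wx]]]; last exact: LSP_fin_prefix_inf Lx wx.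
pose s n := iter n (extend c0) w.
have s_prefix n : prefix (s n) (s n.+1) by apply: prefix_rcons.
have s_size n : n < size (s n.+1) by rewrite size_iter_extend ltn_addl.
exists (chain_limit c0 s); split; last exact: (prefix_inf_chain_limit c0 s_prefix s_size 0).
apply: LSP_inf_of_prefixes => n; exists (s n); split.
- exact: prefix_inf_chain_limit.
- by rewrite size_iter_extend leq_addl.
- exact: LSP_fin_iter_extend.
Qed.
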